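(* For any finite subset $E\subseteq\mathbb{N}$ with $|E|\ge2$, $$\mathcal{F}_E=\Big\{B\subseteq\mathbb{N}:\exists L\subseteq\Pi\setminus A_E\text{ finite with }\bigcap_{p\in L}p\mathbb{N}\cap\bigcap_{p\in A_E\setminus\Pi_E}\big(\{0,\alpha_E(p)\}+p\mathbb{Z}\big)\subseteq B\Big\},$$ where $\bigcap_{p\in\emptyset}p\mathbb{N}=\mathbb{N}$.
   Context: $\mathbb{N}=\{1,2,\dots\}$, $\mathbb{N}_0=\{0\}\cup\mathbb{N}$, $\Pi$ the set of primes, $\Pi_z$ the set of prime divisors of $z$; $p\mathbb{N}=\{pn:n\in\mathbb{N}\}$, $\{0,k\}+p\mathbb{Z}=p\mathbb{Z}\cup(k+p\mathbb{Z})$. The Kirch topology $\tau_K$ on $\mathbb{N}$ is generated by the base of all $a+b\mathbb{N}_0=\{a+bn:n\in\mathbb{N}_0\}$ with $a,b\in\mathbb{N}$ coprime and $b$ square-free. Closures $\overline{U}$ are in $\tau_K$; $\tau_x=\{U\in\tau_K:x\in U\}$. For finite $E\subseteq\mathbb{N}$, $\mathcal{F}_E=\{B\subseteq\mathbb{N}:\exists (U_x)_{x\in E}\in\prod_{x\in E}\tau_x\ (\bigcap_{x\in E}\overline{U_x}\subseteq B)\}$. For nonempty finite $E$: $\Pi_E=\bigcap_{z\in E}\Pi_z$; $A_E=\{p\in\Pi:\exists k\in\mathbb{N}\ (E\subseteq\{0,k\}+p\mathbb{Z})\}$; $\alpha_E:A_E\to\mathbb{N}_0$ is the unique function with $0\le\alpha_E(p)<p$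 and $E\subseteq\{0,\alpha_E(p)\}+p\mathbb{Z}$ for all $p\in A_E$, $\alpha_E(2)=1$, and $\alpha_E(p)=0$ for $p\in\Pi_E\setminus\{2\}$. *)

(* Subsets of N = {1,2,...} are predicates on nat;
   only their positive elements matter. *)
From mathcomp Require Import all_boot.
Set Implicit Arguments. Unset Strict Implicit. Unset Printing Implicit Defensive.

Definition nset := nat -> Prop.

Definition kirch_base (a b : nat) : nset := fun n => exists k : nat, n = a + b * k.

Definition kirch_base_ok (a b : nat) : Prop :=
  0 < a /\ 0 < b /\ coprime a b /\ (forall p, prime p -> ~~ (p * p %| b)).

Definition kirch_open (U : nset) : Prop :=
  (forall n, U n -> 0 < n) /\
  forall x, U x -> exists a b, kirch_base_ok a b /\ kirch_base a b x /\
                        (forall n, kirch_base a b n -> U n).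

Definition kirch_closure (U : nset) : nset := fun x =>
  0 < x /\ forall V, kirch_open V -> V x -> exists y, V y /\ U y.

(* F_E for a finite E (given as a duplicate-free list) *)
Definition F_E (E : seq nat) (B : nset) : Prop :=
  exists U : nat -> nset,
    (forall x, x \in E -> kirch_open (U x) /\ U x x) /\
    (forall n, (forall x, x \in E -> kirch_closure (U x) n) -> B n).

Definition Pi_E (E : seq nat) (p : nat) : Prop :=
  prime p /\ forall z, z \in E -> p %| z.

Definition in_0k_pZ (k p n : nat) : Prop := n = 0 %[mod p] \/ n = k %[mod p].

Definition A_E (E : seq nat) (p : nat) : Prop :=
  prime p /\ exists k, 0 < k /\ forall z, z \in E -> in_0k_pZ k p z.

(* the defining properties of alpha_E (a function on A_E, extended arbitrarily) *)
Definition is_alpha_E (E : seq nat) (alpha : nat -> nat) : Prop :=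
  (forall p, A_E E p -> alpha p < p /\ forall z, z \in E -> in_0k_pZ (alpha p) p z) /\
  alpha 2 = 1 /\
  (forall p, Pi_E E p -> p != 2 -> alpha p = 0).

Definition multN (p n : nat) : Prop := exists m, 0 < m /\ n = p * m.

(* The closure of a basic open set a + b N_0 consists of the n > 0 with
   n = a (mod p) for every prime p | b not dividing n: one inclusion tests
   against the open sets n + p N_0, the other solves the two congruences of
   a + b N_0 and c + d N_0 simultaneously, which is possible because they agree
   modulo the squarefree number gcd(b, d).  Hence F_E is generated by the sets
   of n that agree modulo p with every x in E, for all primes p <= N dividing
   neither x nor n.  For a small prime p outside A_E this forces p | n (else
   n itself would witness p in A_E), and for p in A_E \ Pi_E it says that n
   lies in {0, alpha_E(p)} + pZ; conversely these conditions give back the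
   agreement for every p below a bound on L and on A_E, which is finite since
   E has two distinct elements. *)

From mathcomp Require Import all_boot zify.
From Stdlib Require Import Classical ClassicalEpsilon.
Set Implicit Arguments. Unset Strict Implicit. Unset Printing Implicit Defensive.

Definition squarefree (m : nat) : Prop := forall p, prime p -> ~~ (p * p %| m).

Lemma squarefree_dvd d m : d %| m -> squarefree m -> squarefree d.
Proof. by move=> dm sqf_m p /sqf_m; apply: contra => /dvdn_trans->. Qed.

Lemma squarefree_prime p : prime p -> squarefree p.
Proof.
move=> p_pr q q_pr; apply/negP => /[dup] /(dvdn_trans (dvdn_mulr q (dvdnn q))).
rewrite dvdn_prime2 // => /eqP-> /(dvdn_leq (prime_gt0 p_pr)).
by have := prime_gt1 p_pr; nia.
Qed.

Lemma squarefree_prod_primes (s : seq nat) :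
  uniq s -> all prime s -> squarefree (\prod_(p <- s) p).
Proof.
elim: s => [_ _ p p_pr | q s IHs /= /andP[q_s uniq_s] /andP[q_pr s_pr] p p_pr].
  by rewrite big_nil; apply/negP => /dvdn_leq; have := prime_gt1 p_pr; nia.
rewrite big_cons; have [->|p_q] := eqVneq p q.
  rewrite dvdn_pmul2l ?prime_gt0 // Euclid_dvd_prod // big_has; apply/negP.
  case/hasP=> r r_s; rewrite dvdn_prime2 // ?(allP s_pr) // => /eqP q_r.
  by rewrite q_r r_s in q_s.
rewrite Gauss_dvdr ?IHs // coprimeMl andbb prime_coprime // dvdn_prime2 //.
Qed.

Lemma squarefree_mod m x y : 0 < m -> squarefree m ->
  (forall p, prime p -> p %| m -> x = y %[mod p]) -> x = y %[mod m].
Proof.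
move=> m_gt0 sqf_m; wlog le_yx : x y / y <= x => [wlog_le eq_xy|eq_xy].
  have [/wlog_le|/ltnW /wlog_le le_xy] := leqP y x; first exact.
  by symmetry; apply: le_xy => p p_pr p_m; symmetry; apply: eq_xy.
apply/eqP; rewrite eqn_mod_dvd //; apply/dvdn_partP => // p.
rewrite mem_primes => /and3P[p_pr _ p_m].
have logn1 : logn p m = 1.
  apply/eqP; rewrite eqn_leq leqNgt -(pfactor_dvdn _ _ m_gt0) // (negPf (sqf_m p p_pr)).
  by rewrite logn_gt0 mem_primes p_pr m_gt0 p_m.
by rewrite p_part logn1 expn1 -eqn_mod_dvd //; apply/eqP/eq_xy.
Qed.

Lemma chinese_gcd b d x n : 0 < d -> x = n %[mod gcdn b d] ->
  exists y, y = x %[mod b] /\ y = n %[mod d].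
Proof.
move=> d_gt0 eq_xn; set g := gcdn b d.
have [u _ /dvdnP[c Bezout]] := Bezoutr b d_gt0; rewrite -/g in Bezout.
(* As u * b = - g (mod d), it suffices that g * k = x - n (mod d). *)
set k := x %/ g + n %/ g * d.-1.
have y_shift : x + u * b * k + g * k = x + c * k * d.
  by rewrite -addnA -mulnDl [u * b + g]addnC Bezout mulnAC.
have n_shift : n + g * k = x + g * (n %/ g) * d.
  rewrite /k; set qx := x %/ g; set qn := n %/ g.
  rewrite {1}(divn_eq n g) {1}(divn_eq x g) -/qx -/qn -eq_xn.
  by rewrite -/g -[X in _ = _ + _ * X](prednK d_gt0); nia.
exists (x + u * b * k); split; first by rewrite mulnAC addnC modnMDl.
by apply/eqP; rewrite -(eqn_modDr (g * k)) y_shift n_shift ![x + _]addnC !modnMDl.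
Qed.

Lemma prime_ndvd_coprime p b m : prime p -> p %| b -> coprime m b -> ~~ (p %| m).
Proof. by move=> p_pr p_b m_b; rewrite -prime_coprime // (coprime_dvdl p_b) // coprime_sym. Qed.

Definition primorial_prime_to (x N : nat) : nat :=
  \prod_(p <- iota 0 N.+1 | prime p && ~~ (p %| x)) p.

Lemma dvdn_primorial_prime_to x N p :
  prime p -> p <= N -> ~~ (p %| x) -> p %| primorial_prime_to x N.
Proof.
move=> p_pr le_pN p_x; rewrite Euclid_dvd_prod // big_has_cond; apply/hasP.
by exists p; rewrite ?mem_iota //= p_pr p_x dvdnn.
Qed.

Lemma coprime_primorial_prime_to x N : coprime x (primorial_prime_to x N).
Proof.
rewrite /primorial_prime_to.
elim/big_ind: _ => [|m1 m2|p /andP[p_pr p_x]]; first exact: coprimen1.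
  by rewrite coprimeMr => ->.
by rewrite coprime_sym prime_coprime.
Qed.

Lemma squarefree_primorial_prime_to x N : squarefree (primorial_prime_to x N).
Proof.
rewrite /primorial_prime_to -big_filter; apply: squarefree_prod_primes.
  exact/filter_uniq/iota_uniq.
by apply/allP => p; rewrite mem_filter => /andP[/andP[]].
Qed.

Lemma kirch_baseP a b n : kirch_base a b n <-> a <= n /\ n = a %[mod b].
Proof.
split=> [[k ->]|[le_an /eqP]]; first by rewrite leq_addr mulnC addnC modnMDl.
by rewrite eqn_mod_dvd // => /dvdnP[k eq_k]; exists k; rewrite mulnC -eq_k subnKC.
Qed.

Lemma coprime_kirch_base a b n : coprime a b -> kirch_base a b n -> coprime n b.
Proof. by move=> ab /kirch_baseP[_ eq_na]; rewrite -coprime_modl eq_na coprime_modl. Qed.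

Lemma kirch_open_base a b : kirch_base_ok a b -> kirch_open (kirch_base a b).
Proof.
move=> ok_ab; split=> [n /kirch_baseP[le_an _]|x base_x].
  by case: ok_ab => a_gt0 _; apply: leq_trans le_an.
by exists a, b.
Qed.

Lemma kirch_base_ok_prime p n : prime p -> 0 < n -> ~~ (p %| n) -> kirch_base_ok n p.
Proof.
move=> p_pr n_gt0 p_n; split=> //; split; first exact: prime_gt0.
by split; [rewrite coprime_sym prime_coprime | apply: squarefree_prime].
Qed.

Lemma kirch_base_ok_primorial x N : 0 < x -> kirch_base_ok x (primorial_prime_to x N).
Proof.
move=> x_gt0; split=> //; split; first by apply: prodn_cond_gt0 => p /andP[/prime_gt0].
split; [exact: coprime_primorial_prime_to | exact: squarefree_primorial_prime_to].
Qed.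

Lemma kirch_closureS (U V : nset) n :
  (forall m, U m -> V m) -> kirch_closure U n -> kirch_closure V n.
Proof.
move=> UV [n_gt0 cl_n]; split=> // W open_W W_n.
by have [y [W_y U_y]] := cl_n W open_W W_n; exists y; split=> //; apply: UV.
Qed.

Lemma kirch_base_meet a b c d y : 0 < b -> 0 < d ->
  y = a %[mod b] -> y = c %[mod d] -> exists z, kirch_base a b z /\ kirch_base c d z.
Proof.
move=> b_gt0 d_gt0 y_a y_c; exists (y + b * d * (a + c)).
have le_z : a + c <= y + b * d * (a + c).
  by apply: leq_trans (leq_addl _ _); rewrite leq_pmull // muln_gt0 b_gt0.
split; apply/kirch_baseP; split; try lia.
  by rewrite -mulnA mulnC addnC modnMDl.
by rewrite mulnAC addnC modnMDl.
Qed.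

Lemma kirch_closure_baseP a b n : kirch_base_ok a b ->
  kirch_closure (kirch_base a b) n <->
  0 < n /\ (forall p, prime p -> p %| b -> ~~ (p %| n) -> n = a %[mod p]).
Proof.
move=> ok_ab; have [_ [b_gt0 [ab _]]] := ok_ab.
split=> [[n_gt0 cl_n]|[n_gt0 n_a]].
  split=> // p p_pr p_b p_n.
  have base_n : kirch_base n p n by apply/kirch_baseP.
  have [y [/kirch_baseP[_ y_n] /kirch_baseP[_ y_a]]] :=
    cl_n _ (kirch_open_base (kirch_base_ok_prime p_pr n_gt0 p_n)) base_n.
  by rewrite -y_n -(modn_dvdm y p_b) y_a modn_dvdm.
split=> // V [_ open_V] V_n.
have [c [d [[_ [d_gt0 [cd sqf_d]]] [base_n base_V]]]] := open_V n V_n.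
have a_n : a = n %[mod gcdn b d].
  have g_gt0 : 0 < gcdn b d by rewrite gcdn_gt0 d_gt0 orbT.
  apply: (squarefree_mod g_gt0 (squarefree_dvd (dvdn_gcdr b d) sqf_d)) => p p_pr p_g.
  have p_d := dvdn_trans p_g (dvdn_gcdr b d).
  symmetry; apply: n_a => //; first exact: dvdn_trans p_g (dvdn_gcdl b d).
  exact: prime_ndvd_coprime p_d (coprime_kirch_base cd base_n).
have [y [y_a y_n]] := chinese_gcd d_gt0 a_n.
have /kirch_baseP[_ n_c] := base_n.
have [z [base_z Vz]] := kirch_base_meet b_gt0 d_gt0 y_a (etrans y_n n_c).
by exists z; split=> //; apply: base_V.
Qed.

Lemma finite_bound (T : eqType) (s : seq T) (P : T -> nat -> Prop) :
  (forall x, x \in s -> exists b, P x b) ->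
  exists M, forall x, x \in s -> exists2 b, b <= M & P x b.
Proof.
elim: s => [|y s IHs] Ps; first by exists 0.
have [|M IH_M] := IHs; first by move=> x s_x; apply: Ps; rewrite inE s_x orbT.
have [b Pyb] := Ps y (mem_head y s).
exists (maxn b M) => x; rewrite inE => /predU1P[->|/IH_M[b' le_b'M Pxb']].
  by exists b; rewrite ?leq_maxl.
by exists b'; rewrite // leq_max le_b'M orbT.
Qed.

(* For n > 0: n is in the closure of x + P N_0 for every x in E, where P is
   the product of the primes p <= N not dividing x. *)
Definition agree_below (N : nat) (E : seq nat) (n : nat) : Prop :=
  forall p x, prime p -> p <= N -> x \in E -> ~~ (p %| x) -> ~~ (p %| n) ->
  n = x %[mod p].

Lemma F_E_agree_below E B : 0 < size E -> (forall x, x \in E -> 0 < x) ->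
  F_E E B <-> exists N, forall n, 0 < n -> agree_below N E n -> B n.
Proof.
move=> E_n0 E_gt0; split=> [[U [open_U cl_B]]|[N agree_B]].
  pose nbhd x b := exists a, [/\ kirch_base_ok a b, kirch_base a b x &
                                 forall m, kirch_base a b m -> U x m].
  have [|M nbhd_M] := @finite_bound _ E nbhd.
    move=> x E_x; have [[_ open_Ux] Ux_x] := open_U x E_x.
    by have [a [b [ok_ab [base_x base_U]]]] := open_Ux x Ux_x; exists b, a.
  exists M => n n_gt0 agree_n; apply: cl_B => x E_x.
  have [b le_bM [a [ok_ab base_x base_U]]] := nbhd_M x E_x.
  apply: kirch_closureS base_U _; apply/(kirch_closure_baseP _ ok_ab).
  split=> // p p_pr p_b p_n; have [_ [b_gt0 [ab _]]] := ok_ab.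
  have p_x := prime_ndvd_coprime p_pr p_b (coprime_kirch_base ab base_x).
  have /kirch_baseP[_ x_a] := base_x.
  rewrite (agree_n p x) // ?(leq_trans (dvdn_leq b_gt0 p_b)) //.
  by rewrite -(modn_dvdm x p_b) x_a modn_dvdm.
exists (fun x => kirch_base x (primorial_prime_to x N)); split.
  move=> x E_x; split; first exact/kirch_open_base/kirch_base_ok_primorial/E_gt0.
  exact/kirch_baseP.
move=> n cl_n; have [n_gt0 _] := cl_n _ (mem_nth 0 E_n0).
apply: agree_B => // p x p_pr le_pN E_x p_x p_n.
have ok_x := kirch_base_ok_primorial N (E_gt0 x E_x).
have /(kirch_closure_baseP _ ok_x)[_ n_x] := cl_n x E_x.
exact/n_x/p_n/dvdn_primorial_prime_to.
Qed.

Lemma exists_filter (T : eqType) (P : T -> Prop) (s : seq T) :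
  exists s' : seq T, forall x, x \in s' <-> x \in s /\ P x.
Proof.
exists [seq x <- s | if excluded_middle_informative (P x) then true else false] => x.
by rewrite mem_filter; case: excluded_middle_informative => Px; split=> [/andP[]|[]] //= ->.
Qed.

Lemma multNP p n : 0 < p -> 0 < n -> multN p n <-> p %| n.
Proof.
move=> p_gt0 n_gt0; split=> [[m [_ ->]]|p_n]; first exact: dvdn_mulr.
by exists (n %/ p); rewrite divn_gt0 // dvdn_leq // mulnC divnK.
Qed.

Lemma in_0k_pZ_ndvd k p n : ~~ (p %| n) -> in_0k_pZ k p n -> n = k %[mod p].
Proof. by move=> p_n [n_0|//]; rewrite /dvdn n_0 mod0n in p_n. Qed.

Lemma A_E_le_maxn E p z1 z2 : A_E E p -> z1 \in E -> z2 \in E ->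
  0 < z1 -> 0 < z2 -> z1 != z2 -> p <= maxn z1 z2.
Proof.
move=> [_ [k [_ E_k]]] E_z1 E_z2 z1_gt0 z2_gt0 z12; rewrite leqNgt gtn_max.
apply/negP => /andP[z1_p z2_p]; move: (E_k z1 E_z1) (E_k z2 E_z2) z12.
rewrite /in_0k_pZ mod0n (modn_small z1_p) (modn_small z2_p).
by case=> [z1_0|->] [z2_0|->]; rewrite ?eqxx //; lia.
Qed.

Lemma A_E_le_max E p : uniq E -> (forall z, z \in E -> 0 < z) -> 1 < size E ->
  A_E E p -> p <= \max_(z <- E) z.
Proof.
move=> uniq_E E_gt0 size_E A_p.
have E_i i : i < size E -> nth 0 E i \in E by apply: mem_nth.
have E0 := E_i 0 (ltnW size_E); have E1 := E_i 1 size_E.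
apply: leq_trans (A_E_le_maxn A_p E0 E1 (E_gt0 _ E0) (E_gt0 _ E1) _) _.
  by rewrite nth_uniq // ltnW.
by rewrite geq_max; apply/andP; split; apply: (leq_bigmax_seq (F := id)).
Qed.

Lemma agree_below_of_residues E alpha N (L : seq nat) n :
  (forall p z, A_E E p -> z \in E -> in_0k_pZ (alpha p) p z) ->
  (forall p, prime p -> p <= N -> ~ A_E E p -> p \in L) ->
  (forall p, p \in L -> multN p n) ->
  (forall p, A_E E p -> ~ Pi_E E p -> in_0k_pZ (alpha p) p n) ->
  0 < n -> agree_below N E n.
Proof.
move=> alpha_res L_cover mult_L res_n n_gt0 p x p_pr le_pN E_x p_x p_n.
have [A_p|nA_p] := classic (A_E E p).
  have nPi : ~ Pi_E E p by case=> _ /(_ x E_x); apply/negP.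
  rewrite (in_0k_pZ_ndvd p_n (res_n p A_p nPi)).
  by rewrite (in_0k_pZ_ndvd p_x (alpha_res p x A_p E_x)).
have /(multNP (prime_gt0 p_pr) n_gt0) := mult_L p (L_cover p p_pr le_pN nA_p).
by rewrite (negPf p_n).
Qed.

Lemma multN_of_agree_below E N p n : 0 < n -> agree_below N E n ->
  prime p -> p <= N -> ~ A_E E p -> multN p n.
Proof.
move=> n_gt0 agree_n p_pr le_pN nA_p; apply/(multNP (prime_gt0 p_pr) n_gt0).
apply/negPn/negP => p_n; apply: nA_p; split=> //; exists n; split=> // z E_z.
have [p_z|p_z] := boolP (p %| z); first by left; apply/eqP; rewrite mod0n.
by right; symmetry; apply: agree_n.
Qed.

Lemma residue_of_agree_below E alpha N p n :
  (forall p z, A_E E p -> z \in E -> in_0k_pZ (alpha p) p z) ->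
  agree_below N E n -> A_E E p -> p <= N -> ~ Pi_E E p -> in_0k_pZ (alpha p) p n.
Proof.
move=> alpha_res agree_n A_p le_pN nPi; have [p_pr _] := A_p.
have [/allP p_E|/allPn[z E_z p_z]] := boolP (all (dvdn p) E).
  by case: nPi; split.
have [p_n|p_n] := boolP (p %| n); first by left; apply/eqP; rewrite mod0n.
right; rewrite (agree_n p z) //.
exact: in_0k_pZ_ndvd p_z (alpha_res p z A_p E_z).
Qed.

Unset Implicit Arguments.
Theorem lemma3p4 (E : seq nat) (alpha : nat -> nat) :
  uniq E -> (forall z, z \in E -> 0 < z) -> 2 <= size E ->
  is_alpha_E E alpha ->
  forall B : nat -> Prop, (forall n, B n -> 0 < n) ->
    (F_E E B <->
     exists L : seq nat,
       (forall p, p \in L -> prime p /\ ~ A_E E p) /\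
       (forall n, 0 < n ->
          (forall p, p \in L -> multN p n) ->
          (forall p, A_E E p -> ~ Pi_E E p -> in_0k_pZ (alpha p) p n) ->
          B n)).
Proof.
move=> uniq_E E_gt0 size_E [alpha_E _] B _.
have alpha_res p z : A_E E p -> z \in E -> in_0k_pZ (alpha p) p z.
  by move=> /alpha_E[_]; apply.
rewrite F_E_agree_below ?(ltnW size_E) //.
split=> [[N agree_B]|[L [L_p L_B]]].
  have [L L_def] := exists_filter (fun p => prime p /\ ~ A_E E p) (iota 0 N.+1).
  exists L; split=> [p /L_def[]//|n n_gt0 mult_L res_n].
  apply: agree_B (agree_below_of_residues alpha_res _ mult_L res_n n_gt0) => //.
  by move=> p p_pr le_pN nA_p; apply/L_def; rewrite mem_iota ltnS le_pN.
exists (\max_(q <- L ++ E) q) => n n_gt0 agree_n.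
apply: L_B => // [p L_p'|p A_p nPi].
  have [p_pr nA_p] := L_p p L_p'.
  apply: multN_of_agree_below n_gt0 agree_n p_pr _ nA_p.
  by rewrite leq_bigmax_seq // mem_cat L_p'.
apply: (residue_of_agree_below alpha_res agree_n A_p _ nPi).
by rewrite big_cat leq_max (A_E_le_max uniq_E E_gt0 size_E A_p) orbT.
Qed.
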